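(* Let $\xi=(\tau_L,\delta_L,\tau_R,\delta_R)\in\mathbb{R}^4$, let $P\in\mathbb{R}^2$ and $v\in\mathbb{R}^2$, and let $\alpha$ be the line segment from $P$ to $Q=P+v$, with length $|\alpha|=\|v\|$. Let $s$ be the length of the longest line segment contained in $f_\xi(\alpha)$ and let $c_L,c_R>0$. If $\|A_Lv\|\ge c_L\|v\|$ and $\|A_Rv\|\ge c_R\|v\|$, then $s\ge\frac{c_Lc_R}{c_L+c_R}\,|\alpha|$.
   Context: For $\xi=(\tau_L,\delta_L,\tau_R,\delta_R)\in\mathbb{R}^4$ define $f_\xi:\mathbb{R}^2\to\mathbb{R}^2$ by $f_\xi(x,y)=(\tau_L x+y+1,\,-\delta_L x)$ if $x\le 0$ and $f_\xi(x,y)=(\tau_R x+y+1,\,-\delta_R x)$ if $x\ge 0$, and let $A_L=\begin{bmatrix}\tau_L&1\\-\delta_L&0\end{bmatrix}$, $A_R=\begin{bmatrix}\tau_R&1\\-\delta_R&0\end{bmatrix}$. $\|\cdot\|$ is the Euclidean norm; the length of a line segment is the distance between its endpoints. *)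

From Stdlib Require Import Reals Lra.
Open Scope R_scope.

Definition pt := (R * R)%type.

Definition f_xi (tauL deltaL tauR deltaR : R) (p : pt) : pt :=
  let (x, y) := p in
  if Rle_dec x 0 then (tauL * x + y + 1, - deltaL * x)
  else (tauR * x + y + 1, - deltaR * x).

(* The companion matrix [[tau, 1], [-delta, 0]] applied to a vector. *)
Definition Amul (tau delta : R) (v : pt) : pt :=
  (tau * fst v + snd v, - delta * fst v).

Definition norm2 (v : pt) : R := sqrt (fst v ^ 2 + snd v ^ 2).

Definition padd (p q : pt) : pt := (fst p + fst q, snd p + snd q).
Definition psub (p q : pt) : pt := (fst p - fst q, snd p - snd q).
Definition pscale (t : R) (p : pt) : pt := (t * fst p, t * snd p).

Definition segment (A B : pt) : pt -> Prop :=
  fun z => exists t, 0 <= t <= 1 /\ z = padd A (pscale t (psub B A)).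

Definition image (f : pt -> pt) (S : pt -> Prop) : pt -> Prop :=
  fun z => exists w, S w /\ z = f w.

Definition seg_lengths (S : pt -> Prop) : R -> Prop :=
  fun l => exists A B, (forall z, segment A B z -> S z) /\ l = norm2 (psub B A).

(** The line [x = 0] cuts the parameter interval [0, 1] of the segment into
    a left part of length [t] and a right part of length [1 - t] (one of them
    possibly empty).  On each part [f_xi] is affine with linear part [A_L],
    resp. [A_R], so it maps the part onto a segment of length at least
    [t c_L |v|], resp. [(1 - t) c_R |v|].  The weighted average of these two
    lengths with weights [c_R / (c_L + c_R)] and [c_L / (c_L + c_R)] no longer
    depends on [t]: it is [c_L c_R / (c_L + c_R) |v|]. *)

From Stdlib Require Import Reals Lra Psatz.
Open Scope R_scope.

Definition line_pt (P v : pt) (t : R) : pt := padd P (pscale t v).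

Lemma fst_line_pt (P v : pt) (t : R) : fst (line_pt P v t) = fst P + t * fst v.
Proof. reflexivity. Qed.

Lemma line_pt_sub (P v : pt) (a b : R) :
  psub (line_pt P v b) (line_pt P v a) = pscale (b - a) v.
Proof.
  destruct P, v; unfold line_pt, padd, pscale, psub; simpl; f_equal; ring.
Qed.

Lemma segment_line_pt (P v : pt) (a b : R) (z : pt) :
  a <= b -> segment (line_pt P v a) (line_pt P v b) z ->
  exists t, a <= t <= b /\ z = line_pt P v t.
Proof.
  intros Hab [u [Hu ->]].
  exists (a + u * (b - a)); split; [nra|].
  destruct P, v; unfold line_pt, padd, pscale, psub; simpl; f_equal; ring.
Qed.

Lemma line_pt_in_segment (P v : pt) (t : R) :
  0 <= t <= 1 -> segment P (padd P v) (line_pt P v t).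
Proof.
  intros Ht; exists t; split; [exact Ht|].
  destruct P, v; unfold line_pt, padd, pscale, psub; simpl; f_equal; f_equal; ring.
Qed.

Lemma norm2_pscale (t : R) (p : pt) : 0 <= t -> norm2 (pscale t p) = t * norm2 p.
Proof.
  intros Ht; destruct p as [x y]; unfold norm2, pscale; cbv [fst snd].
  replace ((t * x) ^ 2 + (t * y) ^ 2) with (t ^ 2 * (x ^ 2 + y ^ 2)) by ring.
  rewrite sqrt_mult_alt, sqrt_pow2; nra.
Qed.

Lemma affine_line_pt (tau delta : R) (c P v : pt) (t : R) :
  padd (Amul tau delta (line_pt P v t)) c
  = line_pt (padd (Amul tau delta P) c) (Amul tau delta v) t.
Proof.
  destruct P, v, c; unfold line_pt, Amul, padd, pscale; simpl; f_equal; ring.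
Qed.

Lemma seg_lengths_affine_piece (f : pt -> pt) (tau delta : R) (c P v : pt) (a b : R) :
  0 <= a -> a <= b -> b <= 1 ->
  (forall t, a <= t <= b ->
     f (line_pt P v t) = padd (Amul tau delta (line_pt P v t)) c) ->
  seg_lengths (image f (segment P (padd P v))) ((b - a) * norm2 (Amul tau delta v)).
Proof.
  intros Ha Hab Hb Hf.
  set (Q := padd (Amul tau delta P) c).
  exists (line_pt Q (Amul tau delta v) a), (line_pt Q (Amul tau delta v) b); split.
  - intros z Hz.
    destruct (segment_line_pt _ _ _ _ _ Hab Hz) as [t [Ht ->]].
    exists (line_pt P v t); split; [apply line_pt_in_segment; lra|].
    rewrite Hf by exact Ht; symmetry; apply affine_line_pt.
  - rewrite line_pt_sub, norm2_pscale; lra.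
Qed.

Lemma seg_lengths_0 (S : pt -> Prop) (p : pt) : S p -> seg_lengths S 0.
Proof.
  intros Hp; exists p, p; split.
  - intros z [t [_ ->]].
    replace (padd p (pscale t (psub p p))) with p; [exact Hp|].
    destruct p; unfold padd, pscale, psub; simpl; f_equal; ring.
  - unfold norm2, psub; rewrite <- sqrt_0; f_equal; simpl; ring.
Qed.

Lemma f_xi_left (tauL deltaL tauR deltaR : R) (p : pt) :
  fst p <= 0 -> f_xi tauL deltaL tauR deltaR p = padd (Amul tauL deltaL p) (1, 0).
Proof.
  destruct p as [x y]; simpl; intros Hx.
  unfold f_xi, padd, Amul; simpl.
  destruct (Rle_dec x 0); [f_equal; ring | lra].
Qed.

(* At [x = 0] both affine pieces agree, so the closed half-plane is fine. *)
Lemma f_xi_right (tauL deltaL tauR deltaR : R) (p : pt) :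
  0 <= fst p -> f_xi tauL deltaL tauR deltaR p = padd (Amul tauR deltaR p) (1, 0).
Proof.
  destruct p as [x y]; simpl; intros Hx.
  unfold f_xi, padd, Amul; simpl.
  destruct (Rle_dec x 0).
  - replace x with 0 by lra; f_equal; ring.
  - f_equal; ring.
Qed.

Lemma affine_le0_between (p w a b t : R) :
  a <= t <= b -> p + a * w <= 0 -> p + b * w <= 0 -> p + t * w <= 0.
Proof. intros Ht Ha Hb; destruct (Rle_dec 0 w); nra. Qed.

Lemma affine_root_between (p w : R) :
  p <= 0 <= p + w -> exists t, 0 <= t <= 1 /\ p + t * w = 0.
Proof.
  intros Hp; destruct (Req_dec w 0) as [Hw | Hw].
  - exists 0; lra.
  - assert (Hw_pos : 0 < w) by lra.
    exists (- p / w).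
    assert (Hroot : - p / w * w = - p) by (field; exact Hw).
    split; [split|]; nra.
Qed.

Section Pieces.

Variables tauL deltaL tauR deltaR : R.
Variables P v : pt.

Let S := seg_lengths (image (f_xi tauL deltaL tauR deltaR) (segment P (padd P v))).

Lemma left_piece (a b : R) :
  0 <= a -> a <= b -> b <= 1 ->
  fst (line_pt P v a) <= 0 -> fst (line_pt P v b) <= 0 ->
  S ((b - a) * norm2 (Amul tauL deltaL v)).
Proof.
  rewrite !fst_line_pt; intros Ha Hab Hb HxA HxB.
  apply seg_lengths_affine_piece with (c := (1, 0)); [lra .. |].
  intros t Ht; apply f_xi_left; rewrite fst_line_pt.
  exact (affine_le0_between _ _ a b t Ht HxA HxB).
Qed.

Lemma right_piece (a b : R) :
  0 <= a -> a <= b -> b <= 1 ->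
  0 <= fst (line_pt P v a) -> 0 <= fst (line_pt P v b) ->
  S ((b - a) * norm2 (Amul tauR deltaR v)).
Proof.
  rewrite !fst_line_pt; intros Ha Hab Hb HxA HxB.
  apply seg_lengths_affine_piece with (c := (1, 0)); [lra .. |].
  intros t Ht; apply f_xi_right; rewrite fst_line_pt.
  assert (H := affine_le0_between (- fst P) (- fst v) a b t Ht ltac:(lra) ltac:(lra)).
  lra.
Qed.

Lemma split_pieces :
  exists t, 0 <= t <= 1 /\
    S (t * norm2 (Amul tauL deltaL v)) /\ S ((1 - t) * norm2 (Amul tauR deltaR v)).
Proof.
  set (NL := norm2 (Amul tauL deltaL v)); set (NR := norm2 (Amul tauR deltaR v)).
  assert (HS0 : S 0).
  { apply seg_lengths_0 with (p := f_xi tauL deltaL tauR deltaR (line_pt P v 0)).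
    exists (line_pt P v 0); split; [apply line_pt_in_segment; lra | reflexivity]. }
  destruct (Rle_dec (fst P) 0) as [HP | HP];
    destruct (Rle_dec (fst P + fst v) 0) as [HQ | HQ].
  - exists 1; split; [lra|]; split.
    + replace (1 * NL) with ((1 - 0) * NL) by ring; apply left_piece; rewrite ?fst_line_pt; lra.
    + replace ((1 - 1) * NR) with 0 by ring; exact HS0.
  - destruct (affine_root_between (fst P) (fst v)) as [t [Ht Hroot]]; [lra|].
    exists t; split; [exact Ht|]; split.
    + replace (t * NL) with ((t - 0) * NL) by ring; apply left_piece; rewrite ?fst_line_pt; lra.
    + apply right_piece; rewrite ?fst_line_pt; lra.
  - destruct (affine_root_between (- fst P) (- fst v)) as [t [Ht Hroot]]; [lra|].
    exists (1 - t); split; [lra|]; split.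
    + apply left_piece; rewrite ?fst_line_pt; lra.
    + replace ((1 - (1 - t)) * NR) with ((t - 0) * NR) by ring.
      apply right_piece; rewrite ?fst_line_pt; lra.
  - exists 0; split; [lra|]; split.
    + replace (0 * NL) with 0 by ring; exact HS0.
    + apply right_piece; rewrite ?fst_line_pt; lra.
Qed.

End Pieces.

Lemma split_lower_bound (cL cR t N s : R) :
  0 < cL -> 0 < cR -> t * (cL * N) <= s -> (1 - t) * (cR * N) <= s ->
  cL * cR / (cL + cR) * N <= s.
Proof.
  intros HcL HcR HsL HsR.
  apply (Rmult_le_reg_l (cL + cR)); [lra|].
  replace ((cL + cR) * (cL * cR / (cL + cR) * N))
    with (cR * (t * (cL * N)) + cL * ((1 - t) * (cR * N))) by (field; lra).
  nra.
Qed.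

Theorem lemma5p1 (tauL deltaL tauR deltaR : R) (P v : pt) (cL cR s : R) :
  0 < cL -> 0 < cR ->
  norm2 (Amul tauL deltaL v) >= cL * norm2 v ->
  norm2 (Amul tauR deltaR v) >= cR * norm2 v ->
  is_lub (seg_lengths (image (f_xi tauL deltaL tauR deltaR)
                             (segment P (padd P v)))) s ->
  s >= cL * cR / (cL + cR) * norm2 v.
Proof.
  intros HcL HcR HL HR [Hub _].
  destruct (split_pieces tauL deltaL tauR deltaR P v) as [t [Ht [HSL HSR]]].
  apply Rle_ge, (split_lower_bound cL cR t); [exact HcL | exact HcR | |].
  - apply Rle_trans with (t * norm2 (Amul tauL deltaL v)); [nra | exact (Hub _ HSL)].
  - apply Rle_trans with ((1 - t) * norm2 (Amul tauR deltaR v)); [nra | exact (Hub _ HSR)].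
Qed.
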